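(* Let $b\ge 1$, $k\ge 1$ and $1\le s\le k$ be integers. Then for every integer $t$, $$\sigma^{(b)}_{k}(t;s)=\frac{1}{k}\sum_{\xi\in\Delta_{k}}(\xi)_{s-1}\,\xi^{-t},$$ where $\Delta_k=\{e^{2\pi i h/k}: 1\le h\le k,\ \gcd(h,k)=1\}$ is the set of primitive $k$-th roots of unity and $(\xi)_{s-1}=(1-\xi)(1-\xi^2)\cdots(1-\xi^{s-1})$.
   Context: For a positive integer $m$, $(q)_m=(1-q)\cdots(1-q^m)$, $(q)_0=1$. For integers $b\ge 0$, $k\ge1$ and $1\le s\le k$, let $R^{(b)}_{k,s}(q)=\sum_{t=0}^{k-1}\sigma^{(b)}_k(t;s)q^t$ be the remainder of $\frac{1}{k^b}(q)_{k-1}^{\,b}(q)_{s-1}$ upon division by $1-q^k$; the values $\sigma^{(b)}_k(t;s)$ are extended to all integers $t$ by $k$-periodicity. *)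

From HB Require Import structures.
From mathcomp Require Import all_boot all_order all_algebra all_field.
Set Implicit Arguments. Unset Strict Implicit. Unset Printing Implicit Defensive.
Import Order.TTheory GRing.Theory Num.Theory.
Local Open Scope ring_scope.

Definition qpoch_poly (m : nat) : {poly algC} :=
  \prod_(1 <= i < m.+1) (1 - 'X^i).

Definition qpoch (x : algC) (m : nat) : algC :=
  \prod_(1 <= i < m.+1) (1 - x ^+ i).

Definition Rpoly (b k s : nat) : {poly algC} :=
  ((k%:R ^+ b)^-1 *: (qpoch_poly k.-1 ^+ b * qpoch_poly s.-1)) %% (1 - 'X^k).

(* sigma^{(b)}_k(t;s): coefficient of q^(t mod k), i.e. extended k-periodically *)
Definition sigma (b k s : nat) (t : int) : algC :=
  (Rpoly b k s)`_(absz (t %% k%:Z)%Z).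

From HB Require Import structures.
From mathcomp Require Import all_boot all_order all_algebra all_field.
Set Implicit Arguments.
Unset Strict Implicit.
Unset Printing Implicit Defensive.

Import Order.TTheory GRing.Theory Num.Theory.
Local Open Scope ring_scope.

(* The remainder R of P := k^-b (q)_{k-1}^b (q)_{s-1} modulo 1 - q^k has
   degree < k and agrees with P at every k-th root of unity, so discrete
   Fourier inversion recovers its coefficients from the values P(xi).  At a
   k-th root of unity xi the product (xi)_{k-1} is k when xi is primitive
   (it is 1 + q + ... + q^{k-1} = prod_{0<i<k} (q - xi^i) evaluated at q = 1)
   and 0 otherwise (the factor 1 - xi^d vanishes, d the order of xi), so
   P(xi) is (xi)_{s-1} on primitive roots and 0 on the others. *)

Lemma big_nat_shift_periodic (R : Type) (idx : R) (op : Monoid.com_law idx)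
    n (F : nat -> R) :
  F 0%N = F n ->
  \big[op/idx]_(0 <= i < n) F i = \big[op/idx]_(1 <= i < n.+1) F i.
Proof.
case: n => [|n] F0n; first by rewrite !big_geq.
by rewrite big_nat_recl // big_nat_recr //= big_add1 F0n Monoid.mulmC.
Qed.

Section RootsOfUnity.

Variable F : fieldType.

Lemma sum_expr_unity_root (w : F) k :
  w ^+ k = 1 -> \sum_(i < k) w ^+ i = if w == 1 then k%:R else 0.
Proof.
move=> wk1; have [->|w_neq1] := eqVneq w 1.
  by rewrite (eq_bigr (fun=> 1)) ?sumr_const ?card_ord // => i _; rewrite expr1n.
apply/eqP; have := subrX1 w k; rewrite wk1 subrr => /esym/eqP.
by rewrite mulf_eq0 subr_eq0 (negbTE w_neq1).
Qed.

Lemma coef_prim_root_interp (p : {poly F}) (z : F) k m :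
  k%:R != 0 :> F -> k.-primitive_root z -> (size p <= k)%N -> (m < k)%N ->
  p`_m = k%:R^-1 * \sum_(j < k) p.[z ^+ j] * (z ^+ j ^+ m)^-1.
Proof.
move=> k_neq0 pz size_p mk.
have zm_neq0 : z ^+ m != 0.
  by rewrite expf_neq0 // (prim_root_eq0 pz) -lt0n (prim_order_gt0 pz).
have orthogonality (i : nat) : (i < k)%N ->
    \sum_(j < k) (z ^+ j) ^+ i * (z ^+ j ^+ m)^-1 = if i == m then k%:R else 0.
  move=> ik; have ->: (i == m) = (z ^+ i / z ^+ m == 1).
    rewrite -(divff zm_neq0) eqr_div // (inj_eq (mulIf zm_neq0)).
    by rewrite (eq_prim_root_expr pz) !modn_small.
  rewrite -sum_expr_unity_root; last first.
    by rewrite expr_div_n -!exprM !(mulnC _ k) !exprM (prim_expr_order pz) !expr1n divr1.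
  by apply: eq_bigr => j _; rewrite expr_div_n -!exprM (mulnC i) (mulnC m).
transitivity (k%:R^-1 * \sum_(i < k | i == m :> nat) p`_i * k%:R).
  by rewrite (big_ord1_eq _ (fun i => p`_i * k%:R)) mk mulrCA mulVf ?mulr1.
congr (_ * _); rewrite big_mkcond /=; symmetry.
under eq_bigr => j _ do rewrite (horner_coef_wide _ size_p) mulr_suml.
rewrite exchange_big /=; apply: eq_bigr => i _.
under eq_bigr => j _ do rewrite -mulrA.
by rewrite -mulr_sumr orthogonality //; case: (_ == _); rewrite ?mulr0.
Qed.

Lemma prod_1_sub_prim_root (w : F) k :
  k.-primitive_root w -> \prod_(1 <= i < k) (1 - w ^+ i) = k%:R.
Proof.
move=> pw; have k_gt0 := prim_order_gt0 pw.
have X1_neq0 : 'X - 1 != 0 :> {poly F} by rewrite -polyC1 polyXsubC_eq0.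
have cyclotomic_quotient :
    \prod_(1 <= i < k) ('X - (w ^+ i)%:P) = \sum_(i < k) 'X^i :> {poly F}.
  apply: (mulfI X1_neq0); rewrite -subrX1 -(factor_Xn_sub_1 pw).
  by rewrite [RHS](big_ltn k_gt0) expr0 polyC1.
have := congr1 (horner^~ 1) cyclotomic_quotient; rewrite /= horner_prod horner_sum.
under eq_bigr do rewrite hornerXsubC.
by move=> ->; under eq_bigr do rewrite hornerXn expr1n; rewrite sumr_const card_ord.
Qed.

Lemma prod_1_sub_unity_root_eq0 (w : F) k :
  (0 < k)%N -> w ^+ k = 1 -> ~~ k.-primitive_root w ->
  \prod_(1 <= i < k) (1 - w ^+ i) = 0.
Proof.
move=> k_gt0 wk1 not_prim; have [d pw d_dvd_k] := prim_order_exists k_gt0 wk1.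
have d_lt_k : (d < k)%N.
  by rewrite ltn_neqAle dvdn_leq // andbT; apply: contraNneq not_prim => <-.
apply/eqP; rewrite prodf_seq_eq0; apply/hasP; exists d.
  by rewrite mem_index_iota (prim_order_gt0 pw).
by rewrite (prim_expr_order pw) subrr eqxx.
Qed.

Lemma expfz_mod (w : F) k (t : int) :
  (0 < k)%N -> w ^+ k = 1 -> w ^ t = w ^+ absz (t %% k%:Z)%Z.
Proof.
move=> k_gt0 wk1.
have w_neq0 : w != 0.
  apply/eqP=> w0; move: wk1; rewrite w0 expr0n gtn_eqF //= => /eqP.
  by rewrite eq_sym oner_eq0.
have r_ge0 : 0 <= (t %% k%:Z)%Z by rewrite modz_ge0 // eqz_nat gtn_eqF.
rewrite {1}(divz_eq t k) expfzDr // (mulrC (t %/ k)%Z) -exprz_exp -exprnP wk1.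
by rewrite exp1rz mul1r -{1}(gez0_abs r_ge0).
Qed.

End RootsOfUnity.

Lemma horner_qpoch_poly m x : (qpoch_poly m).[x] = qpoch x m.
Proof. by rewrite horner_prod; apply: eq_bigr => i _; rewrite !hornerE. Qed.

Lemma qpoch_unity_root (w : algC) k : (0 < k)%N -> w ^+ k = 1 ->
  qpoch w k.-1 = if k.-primitive_root w then k%:R else 0.
Proof.
move=> k_gt0 wk1; rewrite /qpoch prednK //.
case: ifPn => [|not_prim]; first exact: prod_1_sub_prim_root.
exact: prod_1_sub_unity_root_eq0.
Qed.

Lemma size_Rpoly b k s : (0 < k)%N -> (size (Rpoly b k s) <= k)%N.
Proof.
move=> k_gt0; have size_div : size (1 - 'X^k : {poly algC}) = k.+1.
  by rewrite -opprB size_polyN -polyC1 size_XnsubC.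
by rewrite -ltnS -size_div ltn_modpN0 // -size_poly_eq0 size_div.
Qed.

Lemma horner_Rpoly_prim_root b k s (z : algC) j :
  (0 < b)%N -> k.-primitive_root z ->
  (Rpoly b k s).[z ^+ j] = if coprime j k then qpoch (z ^+ j) s.-1 else 0.
Proof.
move=> b_gt0 pz; have k_gt0 := prim_order_gt0 pz.
have zjk1 : (z ^+ j) ^+ k = 1 by rewrite exprAC (prim_expr_order pz) expr1n.
rewrite horner_mod; last by rewrite rootE !hornerE zjk1 subrr.
rewrite hornerZ hornerM horner_exp !horner_qpoch_poly.
rewrite (qpoch_unity_root k_gt0 zjk1) (prim_root_exp_coprime j pz).
case: ifP => _; last by rewrite expr0n gtn_eqF // mul0r mulr0.
by rewrite mulrA mulVf ?mul1r // expf_neq0 // pnatr_eq0 gtn_eqF.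
Qed.

Theorem lemma2p4 (b k s : nat) (t : int) (z : algC) :
  (1 <= b)%N -> (1 <= k)%N -> (1 <= s <= k)%N ->
  k.-primitive_root z ->
  sigma b k s t =
  k%:R^-1 * \sum_(1 <= h < k.+1 | coprime h k)
              qpoch (z ^+ h) s.-1 * (z ^+ h) ^ (- t).
Proof.
move=> b_gt0 k_gt0 _ pz.
have k_neq0 : k%:R != 0 :> algC by rewrite pnatr_eq0 gtn_eqF.
have r_ge0 : 0 <= (t %% k%:Z)%Z by rewrite modz_ge0 // eqz_nat gtn_eqF.
have m_lt_k : (absz (t %% k%:Z)%Z < k)%N by rewrite -ltz_nat gez0_abs // ltz_pmod.
rewrite /sigma (coef_prim_root_interp k_neq0 pz (size_Rpoly _ _ k_gt0) m_lt_k).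
congr (_ * _).
pose G h := (if coprime h k then qpoch (z ^+ h) s.-1 else 0) * (z ^+ h) ^ (- t).
transitivity (\sum_(0 <= h < k) G h).
  rewrite big_mkord; apply: eq_bigr => h _.
  have zhk1 : (z ^+ h) ^+ k = 1 by rewrite exprAC (prim_expr_order pz) expr1n.
  by rewrite horner_Rpoly_prim_root // /G -invr_expz (expfz_mod _ k_gt0 zhk1).
rewrite big_nat_shift_periodic.
  by rewrite [RHS]big_mkcond; apply: eq_bigr => h _; rewrite /G; case: ifP; rewrite ?mul0r.
by rewrite /G /coprime gcd0n gcdnn expr0 (prim_expr_order pz).
Qed.
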